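(* The Chabauty space $\mathcal{C}(\mathbf{Z}^2)$ is homeomorphic to $\overline{\mathbf{N}}^2$.
   Context: For a discrete group $G$, $\mathcal{C}(G)$ is the set of subgroups of $G$ with the Chabauty topology (the topology induced by the product topology on $\{0,1\}^G$). $\overline{\mathbf{N}}=\mathbf{N}\cup\{\infty\}$ is the one-point compactification of $\mathbf{N}$. *)

From HB Require Import structures.
From mathcomp Require Import all_boot all_order all_algebra.
From mathcomp Require Import all_classical all_reals all_analysis.
Set Implicit Arguments. Unset Strict Implicit. Unset Printing Implicit Defensive.
Import Order.TTheory GRing.Theory Num.Theory.
Local Open Scope classical_set_scope.
Local Open Scope ring_scope.

Definition Z2 : Type := (int * int)%type.

(** {0,1}^(Z^2) with the product topology (bool is discrete). A subset of Z^2
    is identified with its indicator function. *)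
Definition indicator_space : topologicalType := {ptws Z2 -> bool}.

Definition is_subgroup_Z2 (H : Z2 -> bool) : Prop :=
  H (0, 0) /\
  (forall x y : Z2, H x -> H y -> H (x.1 - y.1, x.2 - y.2)).

Definition subgroups_Z2 : set indicator_space := [set H | is_subgroup_Z2 H].

Definition Chabauty_Z2 : topologicalType := set_type subgroups_Z2.

Definition Nbar : topologicalType := one_point_compactification nat.

Definition homeomorphic (X Y : topologicalType) : Prop :=
  exists (f : X -> Y) (g : Y -> X),
    cancel f g /\ cancel g f /\ continuous f /\ continuous g.

(* Every subgroup of Z^2 is trivial, infinite cyclic (rank 1) or of finite
   index (rank 2).  Subgroups of finite index are isolated points.  Attach to
   each rank-2 subgroup H the rank-1 subgroup cut out of H by the line through
   its first nonzero element in a fixed enumeration of Z^2: the fiber over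
   every rank-1 subgroup C is countably infinite and, enumerated, converges to
   C, because only finitely many members of the fiber disagree with C at a
   given point (they all contain a fixed nonzero multiple of Z^2).  Likewise
   the rank-1 subgroups and their fibers converge to the trivial subgroup,
   uniformly in the fiber.  This is exactly the convergence pattern of
   Nbar^2, whose limit points (m, oo) and (oo, n) play the rank-1 subgroups
   and (oo, oo) the trivial one; the resulting continuous bijection from the
   compact space Nbar^2 onto the Hausdorff space C(Z^2) is a homeomorphism. *)

From HB Require Import structures.
From mathcomp Require Import all_boot all_order all_algebra.
From mathcomp Require Import all_classical all_reals all_analysis.
From mathcomp Require Import zify ring.
Set Implicit Arguments. Unset Strict Implicit. Unset Printing Implicit Defensive.
Import Order.TTheory GRing.Theory Num.Theory.
Local Open Scope classical_set_scope.
Local Open Scope ring_scope.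

Lemma finite_pickle_le (T : countType) (n : nat) :
  finite_set [set x : T | (pickle x <= n)%N].
Proof.
have -> : [set x : T | (pickle x <= n)%N] = pickle @^-1` `I_n.+1 by [].
by apply: finite_preimage => [x y _ _ /(pcan_inj pickleK)|]; last exact: finite_II.
Qed.

Lemma finite_abs_le (m : nat) : finite_set [set z : int | `|z| <= m%:Z].
Proof.
apply: (@sub_finite_set _ _ ((fun i : nat => i%:Z - m%:Z) @` `I_(m + m).+1)).
  move=> z; rewrite /= ler_norml => /andP [zl zr].
  exists (absz (z + m%:Z)); last by rewrite gez0_abs ?addrK //; lia.
  by rewrite /= -ltz_nat gez0_abs; lia.
exact/finite_image/finite_II.
Qed.

Lemma infinite_injective_nat T (A : set T) (f : nat -> T) :
  injective f -> (forall n, A (f n)) -> infinite_set A.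
Proof.
move=> f_inj fA finA; apply: infinite_nat.
have -> : [set: nat] = f @^-1` A by apply/seteqP; split => // n _; exact: fA.
by apply: finite_preimage => // m n _ _; exact: f_inj.
Qed.

Lemma countable_infinite_enum (T : pointedType) (A : set T) :
  countable A -> infinite_set A -> exists e : nat -> T, set_bij [set: nat] A e.
Proof.
by move=> cA iA; apply/card_set_bijP; rewrite card_eq_sym; exact: eq_card_nat.
Qed.

Lemma finite_nat_eventually_notin (A : set nat) :
  finite_set A -> \forall n \near \oo, ~ A n.
Proof.
case/finite_fsetP => X ->; exists (\max_(i <- finmap.enum_fset X) i).+1 => // n /= Xn Xn'.
have := @leq_bigmax_seq _ (finmap.enum_fset X) xpredT id n Xn' erefl.
by rewrite leqNgt Xn.
Qed.

Lemma eventually_notin_finite T (e : nat -> T) (B : set T) :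
  injective e -> finite_set B -> \forall n \near \oo, ~ B (e n).
Proof.
move=> e_inj finB; apply: finite_nat_eventually_notin.
by apply: finite_preimage finB => m n _ _; exact: e_inj.
Qed.

(** * Spaces shaped like Nbar^2 *)

Lemma homeomorphic_sym (X Y : topologicalType) :
  homeomorphic X Y -> homeomorphic Y X.
Proof. by case=> f [g [fK [gK [cf cg]]]]; exists g, f. Qed.

Lemma compact_hausdorff_homeomorphic (X Y : topologicalType) (f : X -> Y) (g : Y -> X) :
  compact [set: X] -> hausdorff_space Y -> continuous f -> cancel f g -> cancel g f ->
  homeomorphic X Y.
Proof.
move=> cX hY cf fK gK; exists f, g; do 3!split => //.
apply/continuous_closedP => A cA.
have -> : g @^-1` A = f @` A.
  apply/seteqP; split => [y Ay|_ [x Ax <-]]; last by rewrite /= fK.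
  by exists (g y) => //; rewrite gK.
apply: compact_closed => //; apply: continuous_compact.
  exact: continuous_subspaceT.
exact: subclosed_compact cA cX _.
Qed.

Definition nbar_ge (K : nat) : set Nbar :=
  [set x | if x is Some n then (K <= n)%N else True].

Lemma nbhs_nbar_ge K : nbhs (None : Nbar) (nbar_ge K).
Proof.
exists `I_K; first by split; [exact/finite_compact/finite_II | exact: discrete_closed].
case=> [n [[k /= kK [<-]]|//]|_] //=.
by rewrite leqNgt; apply/negP.
Qed.

Lemma nbhs_Some (m : nat) : nbhs (Some m : Nbar) [set Some m].
Proof. by rewrite /nbhs /= nbhs_principalE; exact/principal_filterP. Qed.

(* [option (nat * option nat)] indexes a space shaped like Nbar^2: [None] is the
   top limit point, [Some (k, None)] the k-th limit point below it and
   [Some (k, Some j)] the j-th isolated point converging to that one. *)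
Definition grid (p : Nbar * Nbar) : option (nat * option nat) :=
  match p with
  | (None, None) => None
  | (Some m, None) => Some (m.*2, None)
  | (None, Some n) => Some (n.*2.+1, None)
  | (Some m, Some n) =>
      if (m <= n)%N then Some (m.*2, Some (n - m)%N)
      else Some (n.*2.+1, Some (m - n.+1)%N)
  end.

Definition ungrid (q : option (nat * option nat)) : Nbar * Nbar :=
  match q with
  | None => (None, None)
  | Some (k, None) => if odd k then (None, Some k./2) else (Some k./2, None)
  | Some (k, Some j) =>
      if odd k then (Some (k./2 + j).+1, Some k./2) else (Some k./2, Some (k./2 + j)%N)
  end.

Lemma gridK : cancel grid ungrid.
Proof.
case=> [[m|] [n|]] //=; rewrite ?odd_double ?doubleK //=.
  by case: leqP => mn /=; rewrite ?odd_double ?doubleK /=; congr (Some _, Some _); lia.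
by rewrite uphalf_double.
Qed.

Lemma ungridK : cancel ungrid grid.
Proof.
case=> [[k [j|]]|] //=; case: ifP => /= ok;
  rewrite -[in RHS](odd_double_half k) ok //=.
- by rewrite ltnNge leq_addr /=; congr (Some (_, Some _)); lia.
- by rewrite leq_addr; congr (Some (_, Some _)); lia.
Qed.

Lemma grid_nbar_ge K x y k o : nbar_ge K x -> nbar_ge K y -> grid (x, y) = Some (k, o) ->
  (K <= k)%N.
Proof.
case: x y => [m|] [n|] //= Kx Ky.
- by case: ifP => _ [<- _]; rewrite -muln2; lia.
- by case=> <- _; rewrite -muln2; lia.
- by case=> <- _; rewrite -muln2; lia.
Qed.

Section GridParametrisation.
Variables (X : topologicalType) (point : option (nat * option nat) -> X).
Hypothesis column_cvg :
  forall k, (fun j => point (Some (k, Some j))) @ \oo --> point (Some (k, None)).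
(* [globally setT] makes the convergence uniform in the second index. *)
Hypothesis columns_cvg :
  (fun ko => point (Some ko)) @ filter_prod \oo (globally setT) --> point None.

Lemma grid_continuous : continuous (point \o grid).
Proof.
move=> [[m|] [n|]] U /= Up.
- exists ([set Some m], [set Some n]); first by split; exact: nbhs_Some.
  by move=> [x y] [/= -> ->]; exact: nbhs_singleton.
- have [J _ HJ] := column_cvg Up.
  exists ([set Some m], nbar_ge (m + J)).
    by split; [exact: nbhs_Some | exact: nbhs_nbar_ge].
  move=> [x [n|]] [/= -> mJn] /=; last exact: nbhs_singleton.
  by rewrite (_ : (m <= n)%N); [apply: HJ => /=; lia | lia].
- have [J _ HJ] := column_cvg Up.
  exists (nbar_ge (n + J).+1, [set Some n]).
    by split; [exact: nbhs_nbar_ge | exact: nbhs_Some].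
  move=> [[m|] y] [/= nJm ->] /=; last exact: nbhs_singleton.
  by rewrite (_ : (m <= n)%N = false); [apply: HJ => /=; lia | lia].
- have [[A B] [[K _ AK] /= BT] AB] := columns_cvg Up.
  exists (nbar_ge K, nbar_ge K); first by split; exact: nbhs_nbar_ge.
  move=> [x y] [/= Kx Ky]; change (U (point (grid (x, y)))).
  case E: (grid (x, y)) => [[k o]|]; last exact: nbhs_singleton.
  by apply: (AB (k, o)); split => //; [apply: AK; exact: grid_nbar_ge E | exact: BT].
Qed.

Hypothesis point_inj : injective point.
Hypothesis point_surj : forall x, exists q, point q = x.
Hypothesis X_hausdorff : hausdorff_space X.

Theorem grid_homeomorphic : homeomorphic X (Nbar * Nbar)%type.
Proof.
apply: homeomorphic_sym.
pose g x := ungrid (projT1 (cid (point_surj x))).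
apply: (@compact_hausdorff_homeomorphic _ _ (point \o grid) g) => //.
- rewrite -setXTT; apply: compact_setX; exact: one_point_compactification_compact.
- exact: grid_continuous.
- move=> p; rewrite /g; case: cid => q /= /point_inj ->; exact: gridK.
- by move=> x; rewrite /g /=; case: cid => q /= <-; rewrite ungridK.
Qed.

End GridParametrisation.

(** * Convergence in the Chabauty space *)

Lemma indicator_hausdorff : hausdorff_space indicator_space.
Proof. apply: hausdorff_product => _; exact: discrete_hausdorff. Qed.

Lemma initial_hausdorff (S : choiceType) (T : topologicalType) (f : S -> T) :
  injective f -> hausdorff_space T -> hausdorff_space (initial_topology f).
Proof.
rewrite !open_hausdorff => fI hT p q pq.
have /hT [[U V] [/= Up Vq] [oU oV UV]] : f p != f q by rewrite (inj_eq fI).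
exists (f @^-1` U, f @^-1` V).
  by split; apply/mem_set; [move/set_mem: Up | move/set_mem: Vq].
split; [by exists U | by exists V |].
by rewrite /= -preimage_setI (eqP UV) preimage_set0.
Qed.

Lemma chabauty_hausdorff : hausdorff_space Chabauty_Z2.
Proof. exact: (initial_hausdorff val_inj indicator_hausdorff). Qed.

Lemma chabauty_cvg (F : set_system Chabauty_Z2) (H : Chabauty_Z2) : Filter F ->
  (forall t, \forall K \near F, val K t = val H t) -> F --> H.
Proof.
move=> FF FH U; rewrite nbhsE => -[_ [[V oV <-] VH] VU]; apply: filterS VU _.
suff : (set_val @ F : set_system indicator_space) --> (val H : indicator_space).
  by apply; exact: open_nbhs_nbhs.
apply/cvg_sup => t A.
rewrite (@nbhsE (initial_topology (fun g : indicator_space => g t))).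
move=> [_ [[W oW <-] /= WH] WA]; apply: filterS WA _.
by apply: filterS (FH t) => K /= KH; rewrite set_valE /= KH.
Qed.

(** * Subgroups of Z^2 *)

Definition det (x y : Z2) : int := x.1 * y.2 - x.2 * y.1.

Definition zscale (k : int) (x : Z2) : Z2 := (k * x.1, k * x.2).

Definition lincomb (a : int) (x : Z2) (b : int) (y : Z2) : Z2 :=
  (a * x.1 + b * y.1, a * x.2 + b * y.2).

Ltac pair_ring := apply: injective_projections; rewrite /= ?/lincomb ?/zscale /=; ring.

Lemma det_lincombl a x b y z : det (lincomb a x b y) z = a * det x z + b * det y z.
Proof. by rewrite /det /lincomb /=; ring. Qed.

Lemma det_lincombr a x b y z : det z (lincomb a x b y) = a * det z x + b * det z y.
Proof. by rewrite /det /lincomb /=; ring. Qed.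

Lemma det_zscalel k x y : det (zscale k x) y = k * det x y.
Proof. by rewrite /det /zscale /=; ring. Qed.

Lemma detC x y : det y x = - det x y.
Proof. by rewrite /det; ring. Qed.

Lemma detxx x : det x x = 0.
Proof. by rewrite /det mulrC subrr. Qed.

Lemma det_eq0_trans s x y : s != (0, 0) -> det x s = 0 -> det y s = 0 -> det x y = 0.
Proof.
move=> s0 xs ys; apply: contraTeq s0 => xy.
have e1 : det x y * s.1 = det x s * y.1 - det y s * x.1 by rewrite /det; ring.
have e2 : det x y * s.2 = det x s * y.2 - det y s * x.2 by rewrite /det; ring.
rewrite xs ys !mul0r subrr in e1 e2.
move/eqP: e1; move/eqP: e2; rewrite !mulf_eq0 (negbTE xy) /= => /eqP s2 /eqP s1.
by rewrite [s]surjective_pairing s1 s2.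
Qed.

Section Subgroup.
Variable H : Z2 -> bool.
Hypothesis H_subgroup : is_subgroup_Z2 H.

Lemma subgroup0 : H (0, 0). Proof. by case: H_subgroup. Qed.

Lemma subgroupN x : H x -> H (- x.1, - x.2).
Proof. by move=> Hx; have := H_subgroup.2 _ _ subgroup0 Hx; rewrite /= !sub0r. Qed.

Lemma subgroupD x y : H x -> H y -> H (x.1 + y.1, x.2 + y.2).
Proof.
by move=> Hx Hy; have := H_subgroup.2 _ _ Hx (subgroupN Hy); rewrite /= !opprK.
Qed.

Lemma subgroupMz (k : int) x : H x -> H (zscale k x).
Proof.
rewrite /zscale; move=> Hx; have Mn (n : nat) : H (n%:Z * x.1, n%:Z * x.2).
  elim: n => [|n IHn]; first by rewrite !mul0r subgroup0.
  by have := subgroupD IHn Hx; rewrite -!(addn1 n) !PoszD !mulrDl !mul1r.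
case: k => n; first exact: Mn.
by have := subgroupN (Mn n.+1); rewrite NegzE !mulNr.
Qed.

Lemma subgroup_lincomb a x b y : H x -> H y -> H (lincomb a x b y).
Proof. by move=> Hx Hy; exact: subgroupD (subgroupMz a Hx) (subgroupMz b Hy). Qed.

End Subgroup.

Definition trivial_subgroup : Z2 -> bool := fun x => x == (0, 0).

Definition rank1 (H : Z2 -> bool) : Prop :=
  [/\ is_subgroup_Z2 H, exists x, H x /\ x != (0, 0) &
      forall x y, H x -> H y -> det x y = 0].

Definition rank2 (H : Z2 -> bool) : Prop :=
  is_subgroup_Z2 H /\ exists x y, [/\ H x, H y & det x y != 0].

Lemma trivial_is_subgroup : is_subgroup_Z2 trivial_subgroup.
Proof.
split=> [|x y /eqP -> /eqP ->]; first exact: eqxx.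
by rewrite /trivial_subgroup /= subrr.
Qed.

Lemma subgroup_rank_cases H : is_subgroup_Z2 H ->
  [\/ H = trivial_subgroup, rank1 H | rank2 H].
Proof.
move=> sH.
have [|indep] := pselect (exists x y, [/\ H x, H y & det x y != 0]).
  by move=> ?; apply: Or33.
have [[x [Hx x0]]|triv] := pselect (exists x, H x /\ x != (0, 0)).
  apply: Or32; split => //; first by exists x.
  by move=> a b Ha Hb; apply/eqP; apply: contraT => ab; case: indep; exists a, b.
apply: Or31; apply: funext => x; rewrite /trivial_subgroup.
have [->|x0] := eqVneq x (0, 0); first exact: subgroup0.
by apply/negP => Hx; apply: triv; exists x.
Qed.

Lemma rank2_nontrivial H : rank2 H -> exists x, H x /\ x != (0, 0).
Proof.
case=> _ [x [y [Hx _ xy]]]; exists x; split => //.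
by apply: contra xy => /eqP ->; rewrite /det !mul0r subrr.
Qed.

Lemma rank1_not_rank2 H : rank1 H -> ~ rank2 H.
Proof. by case=> _ _ col [_ [x [y [Hx Hy /eqP]]]]; apply; exact: col. Qed.

Lemma trivial_not_rank1 : ~ rank1 trivial_subgroup.
Proof. by case=> _ [x [/eqP -> /eqP]]. Qed.

Lemma trivial_not_rank2 : ~ rank2 trivial_subgroup.
Proof. by move/rank2_nontrivial => [x [/eqP -> /eqP]]. Qed.

Definition zcycle (g : Z2) : Z2 -> bool :=
  fun x => `[< exists k : int, x = zscale k g >].

Lemma zcycle_is_subgroup g : is_subgroup_Z2 (zcycle g).
Proof.
split; first by apply/asboolP; exists 0; pair_ring.
by move=> _ _ /asboolP [k ->] /asboolP [l ->]; apply/asboolP; exists (k - l); pair_ring.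
Qed.

Lemma zcycle_id g : zcycle g g.
Proof. by apply/asboolP; exists 1; pair_ring. Qed.

Lemma zcycle_rank1 g : g != (0, 0) -> rank1 (zcycle g).
Proof.
move=> g0; split; first exact: zcycle_is_subgroup.
  by exists g; split; first exact: zcycle_id.
by move=> _ _ /asboolP [k ->] /asboolP [l ->]; rewrite /det /zscale /=; ring.
Qed.

Lemma subgroup_cyclic_functional H (phi : Z2 -> int) :
  is_subgroup_Z2 H ->
  (forall a x b y, phi (lincomb a x b y) = a * phi x + b * phi y) ->
  (forall y, H y -> phi y = 0 -> y = (0, 0)) ->
  (exists x, H x /\ phi x != 0) ->
  exists2 g, g != (0, 0) & H = zcycle g.
Proof.
move=> sH phi_lin phi_inj [x0 [Hx0 px0]].
have [g [Hg pg0 pg_min]] : exists g, [/\ H g, 0 < phi g &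
    forall y, H y -> 0 < phi y -> phi g <= phi y].
  pose P n := `[< exists y, H y /\ phi y = n.+1%:Z >].
  have P_ex : exists n, P n.
    exists `|phi x0|.-1; apply/asboolP; exists (lincomb (sgz (phi x0)) x0 0 x0).
    split; first exact: subgroup_lincomb.
    by rewrite phi_lin mul0r addr0 prednK ?absz_gt0 // abszEsg.
  have [n /asboolP [g [Hg pg]] n_min] := ex_minnP P_ex.
  exists g; rewrite pg; split => // y Hy py.
  have [m pm] : exists m : nat, phi y = m.+1%:Z.
    exists `|phi y|.-1; rewrite prednK; last by rewrite absz_gt0 gt_eqF.
    by rewrite gez0_abs // ltW.
  by rewrite pm lez_nat ltnS; apply: n_min; apply/asboolP; exists y.
exists g.
  apply: contraTneq pg0 => ->.
  by have := phi_lin 0 g 0 g; rewrite /lincomb !mul0r !addr0 => ->; rewrite ltxx.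
apply: funext => x; apply/idP/idP => [Hx|/asboolP [k ->]]; last exact: subgroupMz.
pose q := (phi x %/ phi g)%Z; pose r := (phi x %% phi g)%Z.
have Hr : H (lincomb 1 x (- q) g) by exact: subgroup_lincomb.
have phi_r : phi (lincomb 1 x (- q) g) = r.
  rewrite phi_lin mul1r mulNr [phi x in LHS](divz_eq (phi x) (phi g)) -/q -/r.
  by rewrite addrAC subrr add0r.
have r0 : r = 0.
  apply/eqP; apply: contraT => r0.
  have r_pos : 0 < r by rewrite lt0r r0 modz_ge0 ?gt_eqF.
  by have := pg_min _ Hr; rewrite phi_r => /(_ r_pos); rewrite leNgt ltz_pmod.
have := phi_inj _ Hr; rewrite phi_r r0 => /(_ erefl) [e1 e2].
apply/asboolP; exists q; apply: injective_projections; apply/eqP; rewrite -subr_eq0.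
  by rewrite -e1 /= mul1r mulNr.
by rewrite -e2 /= mul1r mulNr.
Qed.

Lemma rank1_cyclic H : rank1 H -> exists2 g, g != (0, 0) & H = zcycle g.
Proof.
case=> sH [z [Hz z0]] col.
have [[x [Hx x1]]|no_x1] := pselect (exists x, H x /\ x.1 != 0).
  apply: (subgroup_cyclic_functional (phi := fst)) => //; last by exists x.
  move=> y Hy y1; have := col _ _ Hy Hx; rewrite /det y1 mul0r sub0r => /eqP.
  rewrite oppr_eq0 mulf_eq0 (negbTE x1) orbF => /eqP y2.
  exact: injective_projections.
have H1 : forall y, H y -> y.1 = 0.
  by move=> y Hy; apply/eqP; apply: contraT => y1; case: no_x1; exists y.
apply: (subgroup_cyclic_functional (phi := snd)) => //.
  by move=> y Hy y2; apply: injective_projections => //=; exact: H1.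
exists z; split => //; apply: contra z0 => /eqP z2.
by apply/eqP; apply: injective_projections => //=; exact: H1.
Qed.

Definition periodic (N : nat) : set (Z2 -> bool) :=
  [set H | [/\ is_subgroup_Z2 H, H (N%:Z, 0) & H (0, N%:Z)]].

Lemma periodic_det H x y : is_subgroup_Z2 H -> H x -> H y -> periodic `|det x y|%N H.
Proof.
move=> sH Hx Hy; split => //.
- have := subgroupMz sH (sgz (det x y)) (subgroup_lincomb sH y.2 (- x.2) Hx Hy).
  by congr (is_true (H _)); apply: injective_projections; rewrite /= ?abszEsg /det; ring.
- have := subgroupMz sH (sgz (det x y)) (subgroup_lincomb sH (- y.1) x.1 Hx Hy).
  by congr (is_true (H _)); apply: injective_projections; rewrite /= ?abszEsg /det; ring.
Qed.

Lemma periodic_shift N H x a b : periodic N H -> H x ->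
  H (x.1 + a * N%:Z, x.2 + b * N%:Z).
Proof.
case=> sH HN1 HN2 Hx; have := subgroupD sH Hx (subgroup_lincomb sH a b HN1 HN2).
by rewrite /= !mulr0 addr0 add0r.
Qed.

Lemma periodic_mod N H x : periodic N H ->
  H x = H ((x.1 %% N%:Z)%Z, (x.2 %% N%:Z)%Z).
Proof.
move=> HN; apply/idP/idP => Hx.
  have := periodic_shift (- (x.1 %/ N%:Z)%Z) (- (x.2 %/ N%:Z)%Z) HN Hx.
  by congr (is_true (H _)); apply: injective_projections; rewrite /= /modz; ring.
have := periodic_shift (x.1 %/ N%:Z)%Z (x.2 %/ N%:Z)%Z HN Hx.
by congr (is_true (H _)); apply: injective_projections; rewrite /= /modz; ring.
Qed.

Lemma periodic_finite N : (0 < N)%N -> finite_set (periodic N).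
Proof.
case: N => [//|n] _.
have mod_lt z : (`|(z %% n.+1%:Z)%Z| < n.+1)%N.
  by rewrite -ltz_nat gez0_abs ?ltz_pmod ?modz_ge0.
pose decode (f : {ffun 'I_n.+1 * 'I_n.+1 -> bool}) : Z2 -> bool :=
  fun x => f (inord `|(x.1 %% n.+1%:Z)%Z|, inord `|(x.2 %% n.+1%:Z)%Z|).
apply: (@sub_finite_set _ _ (range decode)); last exact: finite_image finite_finset.
move=> H HN.
exists [ffun ij : 'I_n.+1 * 'I_n.+1 => H ((ij.1 : nat)%:Z, (ij.2 : nat)%:Z)] => //.
apply: funext => x; rewrite /decode ffunE /= (periodic_mod x HN).
by rewrite !inordK ?mod_lt // !gez0_abs ?modz_ge0.
Qed.

Lemma rank1_through_finite s : s != (0, 0) -> finite_set [set C | rank1 C /\ C s].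
Proof.
move=> s0; apply: (@sub_finite_set _ _
  (zcycle @` ([set z | `|z| <= `|s.1|%:Z] `*` [set z | `|z| <= `|s.2|%:Z]))); last first.
  by apply/finite_image/finite_setX; exact: finite_abs_le.
move=> C [/rank1_cyclic [g g0 ->] /asboolP [k sk]]; exists g => //.
have k1 : 1 <= `|k|.
  rewrite -gtz0_ge1 normr_gt0; apply: contraNneq s0 => k0.
  by rewrite sk k0 /zscale !mul0r.
by rewrite sk !abszE !normrM; split; rewrite /= ler_peMl.
Qed.

Lemma rank1_countable : countable rank1.
Proof.
apply: (@sub_countable _ _ _
  (\bigcup_(s in [set s : Z2 | s != (0, 0)]) [set C | rank1 C /\ C s])).
  apply: subset_card_le => C C1; have [_ [x [Cx x0]] _] := C1.
  by exists x => //; split.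
apply: bigcup_countable => [|s s0]; first exact: countableP.
exact/finite_set_countable/rank1_through_finite.
Qed.

Lemma rank1_infinite : infinite_set rank1.
Proof.
apply: (@infinite_injective_nat _ _ (fun n => zcycle (n.+1%:Z, 0))); last first.
  by move=> n; apply: zcycle_rank1.
suff le_of_eq m n : zcycle (m.+1%:Z, 0) = zcycle (n.+1%:Z, 0) -> (n <= m)%N.
  by move=> m n mn; apply/eqP; rewrite eqn_leq !le_of_eq.
move=> mn; have := zcycle_id (m.+1%:Z, 0); rewrite mn => /asboolP [k [/= e _]].
have n_pos : 0 < n.+1%:Z by [].
have k_pos : 0 < k by rewrite -(pmulr_lgt0 _ n_pos) -e.
by rewrite -ltnS -lez_nat e ler_peMl // -gtz0_ge1.
Qed.

Lemma rank2_countable : countable rank2.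
Proof.
apply: (@sub_countable _ _ _ (\bigcup_(N in [set N : nat | (0 < N)%N]) periodic N)).
  apply: subset_card_le => H [sH [x [y [Hx Hy xy]]]].
  by exists `|det x y|%N; [rewrite /= absz_gt0 | exact: periodic_det].
apply: bigcup_countable => [|N N0]; first exact: countableP.
exact/finite_set_countable/periodic_finite.
Qed.

(** * Fibers over the rank-one subgroups *)

(* The first nonzero element of H in the enumeration [pickle] of Z^2, and
   (0, 0) if there is none. *)
Definition pivot (H : Z2 -> bool) : Z2 :=
  xget (0, 0) [set s | [/\ H s, s != (0, 0) &
    forall x, H x -> x != (0, 0) -> (pickle s <= pickle x)%N]].

Lemma pivot_spec (H : Z2 -> bool) : (exists x, H x /\ x != (0, 0)) ->
  [/\ H (pivot H), pivot H != (0, 0) &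
      forall x, H x -> x != (0, 0) -> (pickle (pivot H) <= pickle x)%N].
Proof.
move=> [x0 [Hx0 x00]].
pose P n := `[< exists x, [/\ H x, x != (0, 0) & pickle x = n] >].
have P_ex : exists n, P n by exists (pickle x0); apply/asboolP; exists x0.
have [n /asboolP [x [Hx x0' <-]] x_min] := ex_minnP P_ex.
rewrite /pivot; case: xgetP => // no_min; case: (no_min x); split => // y Hy y0.
by apply: x_min; apply/asboolP; exists y.
Qed.

Definition pivot_line (H : Z2 -> bool) : Z2 -> bool :=
  fun x => H x && (det x (pivot H) == 0).

Definition fiber (C : Z2 -> bool) : set (Z2 -> bool) :=
  [set H | rank2 H /\ pivot_line H = C].

Lemma pivot_line_sub (H : Z2 -> bool) x : pivot_line H x -> H x.
Proof. by case/andP. Qed.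

Lemma pivot_line_pivot H : rank2 H -> pivot_line H (pivot H).
Proof.
move=> /rank2_nontrivial /pivot_spec [Hp _ _].
by rewrite /pivot_line Hp detxx eqxx.
Qed.

Lemma pivot_line_rank1 H : rank2 H -> rank1 (pivot_line H).
Proof.
move=> H2; have [Hp p0 _] := pivot_spec (rank2_nontrivial H2).
split.
- split; first by rewrite /pivot_line (subgroup0 H2.1) /det !mul0r subrr eqxx.
  move=> x y /andP [Hx /eqP xp] /andP [Hy /eqP yp]; apply/andP; split.
    exact: H2.1.2.
  by apply/eqP; move: xp yp; rewrite /det /= => xp yp; rewrite -[0]subr0 -{1}xp -yp; ring.
- by exists (pivot H); split; [exact: pivot_line_pivot | exact: p0].
- by move=> x y /andP [_ /eqP xp] /andP [_ /eqP yp]; exact: det_eq0_trans p0 xp yp.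
Qed.

Lemma fiber_countable C : countable (fiber C).
Proof. by apply: (sub_countable _ rank2_countable); apply: subset_card_le => H []. Qed.

Definition span2 (x y : Z2) : Z2 -> bool :=
  fun z => `[< exists a b, z = lincomb a x b y >].

Lemma span2_is_subgroup x y : is_subgroup_Z2 (span2 x y).
Proof.
split; first by apply/asboolP; exists 0, 0; pair_ring.
move=> _ _ /asboolP [a [b ->]] /asboolP [c [d ->]]; apply/asboolP.
by exists (a - c), (b - d); pair_ring.
Qed.

Lemma span2l x y : span2 x y x.
Proof. by apply/asboolP; exists 1, 0; pair_ring. Qed.

Lemma span2r x y : span2 x y y.
Proof. by apply/asboolP; exists 0, 1; pair_ring. Qed.

Lemma span2_rank2 x y : det x y != 0 -> rank2 (span2 x y).
Proof.
move=> xy; split; first exact: span2_is_subgroup.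
by exists x, y; split; [exact: span2l | exact: span2r |].
Qed.

Lemma pivot_line_span2 g v : g != (0, 0) ->
  (forall x, (pickle x <= pickle g)%N -> `|det x g| < `|det v g|) ->
  pivot_line (span2 g v) = zcycle g.
Proof.
move=> g0 v_big; have vg : det v g != 0.
  by rewrite -normr_gt0; apply: le_lt_trans (v_big g (leqnn _)).
have gv : det g v != 0 by rewrite detC oppr_eq0.
have [/asboolP [a [b p_ab]] p0 p_min] := pivot_spec (rank2_nontrivial (span2_rank2 gv)).
have b0 : b = 0.
  apply/eqP; apply: contraTT (v_big _ (p_min _ (span2l g v) g0)) => b0.
  rewrite -leNgt p_ab det_lincombl detxx mulr0 add0r normrM ler_peMl //.
  by rewrite -gtz0_ge1 normr_gt0.
have a0 : a != 0.
  by apply: contraNneq p0 => a0; rewrite p_ab a0 b0; apply/eqP; pair_ring.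
apply: funext => x; rewrite /pivot_line p_ab b0; apply/idP/idP.
  case/andP => /asboolP [c [d ->]].
  rewrite det_lincombl !det_lincombr !detxx !(mulr0, mul0r) !addr0 add0r !mulf_eq0.
  rewrite (negbTE a0) (negbTE vg) /= orbF => /eqP ->.
  by apply/asboolP; exists c; pair_ring.
case/asboolP => c ->; apply/andP; split.
  by apply/asboolP; exists c, 0; pair_ring.
by rewrite /det /lincomb /=; apply/eqP; ring.
Qed.

Lemma span2_zscale_le g u (m n : nat) : det u g != 0 -> (0 < n)%N ->
  span2 g (zscale m%:Z u) (zscale n%:Z u) -> (m <= n)%N.
Proof.
move=> ug n0 /asboolP [a [b /(congr1 (det^~ g))]].
rewrite det_lincombl detxx mulr0 add0r !det_zscalel mulrA => /(mulIf ug) nbm.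
move: nbm; case: m => [//|m] nbm.
have m_pos : 0 < m.+1%:Z by [].
have b1 : 1 <= b by rewrite -gtz0_ge1 -(pmulr_lgt0 _ m_pos) -nbm ltz_nat.
by rewrite -lez_nat nbm ler_peMl.
Qed.

Lemma det_bounded g : exists B : nat,
  forall x, (pickle x <= pickle g)%N -> (`|det x g| <= B)%N.
Proof.
pose f (i : 'I_(pickle g).+1) := if unpickle i is Some x then `|det x g|%N else 0%N.
exists (\max_i f i) => x; rewrite -ltnS => xg.
by have := @leq_bigmax _ f (Ordinal xg); rewrite /f /= pickleK.
Qed.

Lemma fiber_infinite C : rank1 C -> infinite_set (fiber C).
Proof.
move=> /rank1_cyclic [g g0 ->].
pose u : Z2 := if g.2 != 0 then (1, 0) else (0, 1).
have ug : det u g != 0.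
  rewrite /u /det; case: ifP => [g2|/negbFE/eqP g2] /=.
    by rewrite mul1r mul0r subr0.
  rewrite mul0r mul1r sub0r oppr_eq0; apply: contraNneq g0 => g1.
  by rewrite [g]surjective_pairing g1 g2.
have [B B_ge] := det_bounded g.
pose H (n : nat) := span2 g (zscale (B + n).+1%:Z u).
apply: (@infinite_injective_nat _ _ H).
  move=> m n Hmn; apply/eqP; rewrite -(eqn_add2l B) -eqSS eqn_leq.
  apply/andP; split; apply: span2_zscale_le ug _ _ => //.
    by change (H m (zscale (B + n).+1%:Z u)); rewrite Hmn; exact: span2r.
  by change (H n (zscale (B + m).+1%:Z u)); rewrite -Hmn; exact: span2r.
move=> n; split.
  by apply: span2_rank2; rewrite detC oppr_eq0 det_zscalel mulf_eq0 negb_or ug andbT.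
apply: pivot_line_span2 => // x /B_ge xB.
rewrite det_zscalel normrM -!abszE -PoszM ltz_nat.
have : (0 < `|det u g|)%N by rewrite absz_gt0.
by move: (`|det x g|%N) (`|det u g|%N) xB => a b; nia.
Qed.

Lemma fiber_sub C H x : fiber C H -> C x -> H x.
Proof. by case=> _ <-; exact: pivot_line_sub. Qed.

Lemma fiber_disagree_finite C t : rank1 C ->
  finite_set [set H | fiber C H /\ H t != C t].
Proof.
move=> C1; have [_ [g [Cg g0]] C_col] := C1.
have key H : fiber C H -> H t != C t -> det t g != 0 /\ periodic `|det t g| H.
  move=> CH Ht_ne; have [H2 HC] := CH.
  have [Ht Ct] : H t /\ ~~ C t.
    case: (boolP (C t)) (Ht_ne) => [/(fiber_sub CH) ->|_]; first by rewrite eqxx.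
    by case: (H t).
  have tp : det t (pivot H) != 0 by apply: contra Ct => tp; rewrite -HC /pivot_line Ht tp.
  split; last by apply: periodic_det H2.1 Ht (fiber_sub CH Cg).
  apply: contra tp => /eqP tg; apply/eqP; apply: det_eq0_trans g0 tg _.
  by rewrite detC C_col ?oppr0 // -HC pivot_line_pivot.
have [tg0|tg0] := eqVneq (det t g) 0.
  apply: (@sub_finite_set _ _ set0) => // H [CH Ht_ne].
  by case: (key H CH Ht_ne); rewrite tg0 eqxx.
apply: (@sub_finite_set _ _ (periodic `|det t g|)).
  by move=> H [CH Ht_ne]; case: (key H CH Ht_ne).
by apply: periodic_finite; rewrite absz_gt0.
Qed.

Lemma fibers_through_finite t : t != (0, 0) ->
  finite_set [set C | rank1 C /\ (C t \/ exists H, fiber C H /\ H t)].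
Proof.
move=> t0; apply: (@sub_finite_set _ _
  (\bigcup_(s in [set s | (pickle s <= pickle t)%N /\ s != (0, 0)])
    [set C | rank1 C /\ C s])).
  move=> C [C1 [Ct|[H [CH Ht]]]]; first by exists t.
  have [Hp p0 p_min] := pivot_spec (rank2_nontrivial CH.1).
  exists (pivot H); first by split => //; exact: p_min.
  by split => //; case: CH => H2 <-; exact: pivot_line_pivot.
apply: bigcup_finite => [|s [_ s0]]; last exact: rank1_through_finite.
by apply: sub_finite_set (finite_pickle_le _ (pickle t)) => s [].
Qed.

(** * Enumerating the Chabauty space *)

Section Enumeration.
Variable eL : nat -> Z2 -> bool.
Hypothesis eL_bij : set_bij [set: nat] rank1 eL.
Variable eF : nat -> nat -> Z2 -> bool.
Hypothesis eF_bij : forall k, set_bij [set: nat] (fiber (eL k)) (eF k).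

Let eL_rank1 k : rank1 (eL k).
Proof. by have [+ _ _] := eL_bij; apply. Qed.

Let eF_fiber k j : fiber (eL k) (eF k j).
Proof. by have [+ _ _] := eF_bij k; apply. Qed.

Let eL_inj : injective eL.
Proof. by have [_ + _] := eL_bij => + m n; apply; rewrite inE. Qed.

Let eF_inj k : injective (eF k).
Proof. by have [_ + _] := eF_bij k => + m n; apply; rewrite inE. Qed.

Definition enum_subgroup (q : option (nat * option nat)) : Z2 -> bool :=
  match q with
  | None => trivial_subgroup
  | Some (k, None) => eL k
  | Some (k, Some j) => eF k j
  end.

Lemma enum_subgroup_mem q : enum_subgroup q \in subgroups_Z2.
Proof.
apply: mem_set; case: q => [[k [j|]]|] /=.
- by have [[]] := eF_fiber k j.
- by have [] := eL_rank1 k.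
- exact: trivial_is_subgroup.
Qed.

Definition enum_chabauty (q : option (nat * option nat)) : Chabauty_Z2 :=
  exist _ (enum_subgroup q) (enum_subgroup_mem q).

Lemma enum_chabauty_inj : injective enum_chabauty.
Proof.
move=> p q /(congr1 val) /=.
case: p q => [[k [j|]]|] [[k' [j'|]]|] //= E.
- have kk' : k = k'.
    by apply: eL_inj; rewrite -(eF_fiber k j).2 -(eF_fiber k' j').2 E.
  by move: E; rewrite kk' => /eF_inj ->.
- by case: (rank1_not_rank2 (eL_rank1 k')); rewrite -E; case: (eF_fiber k j).
- by case: trivial_not_rank2; rewrite -E; case: (eF_fiber k j).
- by case: (rank1_not_rank2 (eL_rank1 k)); rewrite E; case: (eF_fiber k' j').
- by rewrite (eL_inj E).
- by case: trivial_not_rank1; rewrite -E.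
- by case: trivial_not_rank2; rewrite E; case: (eF_fiber k' j').
- by case: trivial_not_rank1; rewrite E.
Qed.

Lemma enum_chabauty_surj H : exists q, enum_chabauty q = H.
Proof.
have /set_mem sH := valP H.
suff [q qH] : exists q, enum_subgroup q = val H by exists q; apply: val_inj.
case: (subgroup_rank_cases sH) => [->|H1|H2]; first by exists None.
- by have [_ _ /(_ _ H1) [k _ <-]] := eL_bij; exists (Some (k, None)).
- have [_ _ /(_ _ (pivot_line_rank1 H2)) [k _ Ek]] := eL_bij.
  have [_ _ /(_ (val H)) [|j _ <-]] := eF_bij k; first by rewrite /fiber /= Ek.
  by exists (Some (k, Some j)).
Qed.

Lemma enum_fiber_cvg k :
  (fun j => enum_chabauty (Some (k, Some j))) @ \oo --> enum_chabauty (Some (k, None)).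
Proof.
apply: chabauty_cvg => t /=.
have := eventually_notin_finite (@eF_inj k) (fiber_disagree_finite t (eL_rank1 k)).
apply: filterS => j agree; apply/eqP; apply: contraT => ne.
by case: agree; split; first exact: eF_fiber.
Qed.

Lemma enum_columns_cvg :
  (fun ko => enum_chabauty (Some ko)) @ filter_prod \oo (globally setT) -->
  enum_chabauty None.
Proof.
apply: chabauty_cvg => t /=.
have [->|t0] := eqVneq t (0, 0).
  apply: nearW => K; rewrite /trivial_subgroup eqxx.
  by have /set_mem [] := valP K.
have [K _ KS] := eventually_notin_finite eL_inj (fibers_through_finite t0).
exists ([set k | (K <= k)%N], setT); first by split => //; exists K.
move=> [k o] [/= /KS S_k _]; rewrite /trivial_subgroup (negbTE t0).
case: o => [j|] /=; apply/negP => Ht; apply: S_k; split => //.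
- by right; exists (eF k j).
- by left.
Qed.

End Enumeration.

Theorem corollary2 : homeomorphic Chabauty_Z2 (Nbar * Nbar)%type.
Proof.
have [eL eL_bij] := countable_infinite_enum rank1_countable rank1_infinite.
have /choice [eF eF_bij] : forall k, exists e, set_bij [set: nat] (fiber (eL k)) e.
  move=> k; apply: countable_infinite_enum; first exact: fiber_countable.
  by apply: fiber_infinite; have [+ _ _] := eL_bij; apply.
apply: (@grid_homeomorphic _ (enum_chabauty eL_bij eF_bij)).
- exact: enum_fiber_cvg.
- exact: enum_columns_cvg.
- exact: enum_chabauty_inj.
- exact: enum_chabauty_surj.
- exact: chabauty_hausdorff.
Qed.
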